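(* Let $k\ge 2$, $n\ge1$, and let $L_n$ and $\varphi:L_n\to E^{n-1}$ be as in the context. Then $\varphi$ is injective.
   Context: $E=\{0,\dots,k-1\}$. For $\mathbf a\in E^n$, $w(\mathbf a)=a_1+\dots+a_n$, and $\mathcal B_t=\{\mathbf a\in E^n: w(\mathbf a)=t\}$. Let $g=\lfloor n(k-1)/2\rfloor$ and $C_i=\{\mathbf a\in E^n: a_1=i\}$. Define $L_n=(\mathcal B_0\cup\dots\cup\mathcal B_g)\cap(C_0\cup C_{k-1})$ if $n(k-1)$ is odd, and $L_n=((\mathcal B_0\cup\dots\cup\mathcal B_{g-1})\cap(C_0\cup C_{k-1}))\cup(\mathcal B_g\cap C_0)$ if $n(k-1)$ is even. For $a\in E$ let $\overline a=k-1-a$. Define $\varphi(a_1,\dots,a_n)=(a_2,\dots,a_n)$ if $a_1=0$ and $\varphi(a_1,\dots,a_n)=(\overline{a}_2,\dots,\overline{a}_n)$ if $a_1=k-1$. *)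

From mathcomp Require Import all_boot.
Set Implicit Arguments. Unset Strict Implicit. Unset Printing Implicit Defensive.

(* E = {0,...,k-1} is 'I_k ; E^n is n.-tuple 'I_k. *)

Definition weight (k n : nat) (a : n.-tuple 'I_k) : nat := \sum_(x <- a) (x : nat).

(* first coordinate a_1 (as a natural number; 0 if n = 0, never used then) *)
Definition first (k n : nat) (a : n.-tuple 'I_k) : nat := head 0 (map (@nat_of_ord k) a).

Definition gval (k n : nat) : nat := (n * (k - 1)) %/ 2.

Definition inL (k n : nat) (a : n.-tuple 'I_k) : bool :=
  let g := gval k n in
  let w := weight a in
  let a1 := first a in
  if odd (n * (k - 1)) then
    (w <= g) && ((a1 == 0) || (a1 == k - 1))
  else
    ((w < g) && ((a1 == 0) || (a1 == k - 1))) || ((w == g) && (a1 == 0)).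

Definition cbar (k : nat) (x : 'I_k) : 'I_k := rev_ord x.

Definition phi (k n : nat) (a : n.-tuple 'I_k) : n.-1.-tuple 'I_k :=
  if first a == 0 then behead_tuple a else map_tuple (@cbar k) (behead_tuple a).

From mathcomp Require Import all_boot.
From mathcomp Require Import zify.

Set Implicit Arguments.
Unset Strict Implicit.
Unset Printing Implicit Defensive.

(* Both branches of [phi] only forget the first coordinate, so [phi] can only
   identify a word starting with 0 with one starting with k-1.  Complementing
   the tail turns weight w into (n-1)(k-1) - w, so two such words have weights
   summing to n(k-1); but the weight bounds defining L_n force twice each weight
   to be at most n(k-1), strictly so for a word starting with k-1. *)

Section Words.

Variable k : nat.

Lemma weight_cons n (x : 'I_k) (s : n.-tuple 'I_k) :
  weight [tuple of x :: s] = x + weight s.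
Proof. by rewrite /weight big_cons. Qed.

Lemma weight_map_cbar n (s : n.-tuple 'I_k) :
  weight s + weight (map_tuple (@cbar k) s) = n * (k - 1).
Proof.
elim: n s => [|n IH] s; first by rewrite tuple0 /weight !big_nil.
case/tupleP: s => x s.
have -> : map_tuple (@cbar k) [tuple of x :: s] = [tuple of cbar x :: map_tuple (@cbar k) s].
  exact: val_inj.
rewrite !weight_cons mulSn -(IH s) /cbar /=; have := ltn_ord x; lia.
Qed.

Lemma phi_cons n (x : 'I_k) (s : n.-tuple 'I_k) :
  phi [tuple of x :: s] = if x == 0 :> nat then s else map_tuple (@cbar k) s.
Proof. by rewrite /phi /first /=; case: ifP => _; apply: val_inj. Qed.

Lemma map_cbar_inj n : injective (map_tuple (@cbar k) : n.-tuple 'I_k -> _).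
Proof. by move=> s t /(congr1 val) /(inj_map (@rev_ord_inj k)) /val_inj. Qed.

Lemma inL_weight n (a : n.-tuple 'I_k) :
  inL a -> 2 * weight a + (first a != 0) <= n * (k - 1).
Proof.
have := odd_double_half (n * (k - 1)); rewrite /inL /gval divn2 -mul2n.
set g := _./2; case: (odd _) => /= Eg.
  by case/andP=> Hw _; case: (_ != 0); lia.
case/orP=> [/andP [Hw _] | /andP [/eqP Hw ->]] /=; first case: (_ != 0); lia.
Qed.

Lemma inL_first n (a : n.-tuple 'I_k) : inL a -> first a != 0 -> first a = k - 1.
Proof.
rewrite /inL; case: (odd _) => [/andP [_ /orP [->|/eqP //]] //|].
by case/orP=> [/andP [_ /orP [->|/eqP //]]|/andP [_ ->]].
Qed.

End Words.

Theorem lemma2 (k n : nat) (hk : 2 <= k) (hn : 1 <= n) :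
  {in [pred a : n.-tuple 'I_k | inL a] &, injective (@phi k n)}.
Proof.
case: n hn => // m _ a b; rewrite !inE.
case/tupleP: a => x s; case/tupleP: b => y t => La Lb.
have Wa := inL_weight La; have Wb := inL_weight Lb.
have Fa := inL_first La; have Fb := inL_first Lb.
rewrite /first /= !weight_cons in Wa Wb Fa Fb.
have Ws := weight_map_cbar s; have Wt := weight_map_cbar t.
rewrite !phi_cons; have [x0|x0] := eqVneq (x : nat) 0; have [y0|y0] := eqVneq (y : nat) 0.
- by move=> <-; congr [tuple of _ :: _]; apply: val_inj; rewrite /= x0 y0.
- by move=> st; rewrite st in Wa; lia.
- by move=> st; rewrite -st in Wb; lia.
move=> /map_cbar_inj <-; congr [tuple of _ :: _].
by apply: val_inj; rewrite /= Fa // Fb.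
Qed.
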